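(* Let $f:(L_1,[\cdot,\cdot]_1,\alpha_1)\to(L_2,[\cdot,\cdot]_2,\alpha_2)$ be a surjective morphism of Hom-Lie algebras over a field $F$. If $\mu_A$ is a fuzzy Hom-Lie ideal of $L_1$, then the fuzzy set $\mu_{f(A)}$ on $L_2$, defined by $\mu_{f(A)}(y)=\sup_{x\in f^{-1}(y)}\mu_A(x)$ for $y\in f(L_1)$ and $\mu_{f(A)}(y)=0$ otherwise, is a fuzzy Hom-Lie ideal of $L_2$.
   Context: A Hom-Lie algebra over $F$ is a triple $(L,[\cdot,\cdot],\alpha)$ with $L$ an $F$-vector space, $\alpha:L\to L$ linear and $[\cdot,\cdot]$ bilinear, skew-symmetric, satisfying $[\alpha(x),[y,z]]+[\alpha(y),[z,x]]+[\alpha(z),[x,y]]=0$. A morphism of Hom-Lie algebras is a linear map $f$ with $f([x,y]_1)=[f(x),f(y)]_2$ and $f\circ\alpha_1=\alpha_2\circ f$. A fuzzy subset $\mu:L\to[0,1]$ is a fuzzy Hom-Lie ideal if for all $x,y\in L$, $c\in F$: $\mu(x+y)\ge\min\{\mu(x),\mu(y)\}$, $\mu(cx)\ge\mu(x)$, $\mu([x,y])\ge\max\{\mu(x),\mu(y)\}$, $\mu(\alpha(x))\ge\mu(x)$. *)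

From HB Require Import structures.
From mathcomp Require Import all_boot all_order all_algebra.
From mathcomp Require Import boolp classical_sets reals.
Set Implicit Arguments. Unset Strict Implicit. Unset Printing Implicit Defensive.
Import Order.TTheory GRing.Theory Num.Theory.
Local Open Scope ring_scope.
Local Open Scope classical_set_scope.

Definition is_hom_lie (F : fieldType) (L : lmodType F)
    (br : L -> L -> L) (alpha : L -> L) : Prop :=
  (forall (c : F) (x y : L), alpha (c *: x + y) = c *: alpha x + alpha y) /\
  (forall (c : F) (x y z : L), br (c *: x + y) z = c *: br x z + br y z) /\
  (forall (c : F) (x y z : L), br z (c *: x + y) = c *: br z x + br z y) /\
  (forall x y : L, br x y = - br y x) /\
  (forall x y z : L,
     br (alpha x) (br y z) + br (alpha y) (br z x) + br (alpha z) (br x y) = 0).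

Definition is_hom_lie_morphism (F : fieldType) (L1 L2 : lmodType F)
    (br1 : L1 -> L1 -> L1) (alpha1 : L1 -> L1)
    (br2 : L2 -> L2 -> L2) (alpha2 : L2 -> L2) (f : L1 -> L2) : Prop :=
  (forall (c : F) (x y : L1), f (c *: x + y) = c *: f x + f y) /\
  (forall x y : L1, f (br1 x y) = br2 (f x) (f y)) /\
  (forall x : L1, f (alpha1 x) = alpha2 (f x)).

Definition fuzzy_hom_lie_ideal (R : realType) (F : fieldType) (L : lmodType F)
    (br : L -> L -> L) (alpha : L -> L) (mu : L -> R) : Prop :=
  (forall x : L, 0 <= mu x <= 1) /\
  (forall x y : L, mu (x + y) >= Num.min (mu x) (mu y)) /\
  (forall (c : F) (x : L), mu (c *: x) >= mu x) /\
  (forall x y : L, mu (br x y) >= Num.max (mu x) (mu y)) /\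
  (forall x : L, mu (alpha x) >= mu x).

Definition fuzzy_image (R : realType) (F : fieldType) (L1 L2 : lmodType F)
    (f : L1 -> L2) (mu : L1 -> R) (y : L2) : R :=
  if `[< exists x : L1, f x = y >] then sup [set mu x | x in f @^-1` [set y]]
  else 0.

From HB Require Import structures.
From mathcomp Require Import all_boot all_order all_algebra.
From mathcomp Require Import boolp classical_sets reals.
Local Open Scope ring_scope.
Import Order.TTheory GRing.Theory Num.Theory.
Local Open Scope classical_set_scope.

(* Each axiom of a fuzzy Hom-Lie ideal is an inequality of the form
   mu (op a b) >= min/max (mu a) (mu b) for an operation op that f carries to
   the corresponding operation of L2.  Since f is surjective, the image fuzzy
   set is the supremum of mu over the (nonempty) fibres, and such inequalities
   pass to suprema: upper bounds are tested on a fibre, and for the min-axiom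
   one approximates both suprema from below by points of the fibres. *)

Set Implicit Arguments.

Section CombinationLinear.
Context {F : fieldType} {U V : lmodType F} {f : U -> V}.
Hypothesis f_lin : forall (c : F) (x y : U), f (c *: x + y) = c *: f x + f y.

Lemma comb_linearD : {morph f : x y / x + y}.
Proof. by move=> x y; rewrite -[x]scale1r f_lin !scale1r. Qed.

Lemma comb_linear0 : f 0 = 0.
Proof. by apply: (addrI (f 0)); rewrite -comb_linearD !addr0. Qed.

Lemma comb_linearZ (c : F) : {morph f : x / c *: x}.
Proof. by move=> x; rewrite -[c *: x]addr0 f_lin comb_linear0 addr0. Qed.

End CombinationLinear.

Section FuzzyImage.
Context {R : realType} {F : fieldType} {L1 L2 : lmodType F}.
Context {f : L1 -> L2} {mu : L1 -> R}.
Hypothesis f_surj : forall y : L2, exists x : L1, f x = y.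
Hypothesis mu_ub : has_ubound (range mu).

Let fibre y := [set mu x | x in f @^-1` [set y]].

Lemma fuzzy_imageE y : fuzzy_image f mu y = sup (fibre y).
Proof. by rewrite /fuzzy_image; case: asboolP => // -[]; apply: f_surj. Qed.

Lemma fibre_neq0 y : fibre y !=set0.
Proof. by have [a fa] := f_surj y; exists (mu a), a. Qed.

Lemma le_fuzzy_image a y : f a = y -> mu a <= fuzzy_image f mu y.
Proof.
move=> fa; rewrite fuzzy_imageE; apply: ub_le_sup; last by exists a.
by apply: subset_has_ubound mu_ub => _ [b _ <-]; exists b.
Qed.

Lemma fuzzy_image_le y t :
  (forall a, f a = y -> mu a <= t) -> fuzzy_image f mu y <= t.
Proof.
by move=> le_t; rewrite fuzzy_imageE; apply: ge_sup (fibre_neq0 y) _ => _ [a fa <-]; apply: le_t.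
Qed.

Lemma fuzzy_image_gt y t :
  t < fuzzy_image f mu y -> exists2 a, f a = y & t < mu a.
Proof. by rewrite fuzzy_imageE => /(sup_gt (fibre_neq0 y)) [_ [a fa <-]]; exists a. Qed.

Lemma fuzzy_image_homo (g : L1 -> L1) (h : L2 -> L2) :
  {morph f : a / g a >-> h a} -> (forall a, mu a <= mu (g a)) ->
  forall y, fuzzy_image f mu y <= fuzzy_image f mu (h y).
Proof.
move=> fg mu_g y; apply: fuzzy_image_le => a fa.
by apply: le_trans (mu_g a) _; apply: le_fuzzy_image; rewrite fg fa.
Qed.

Lemma fuzzy_image_max (g : L1 -> L1 -> L1) (h : L2 -> L2 -> L2) :
  {morph f : a b / g a b >-> h a b} ->
  (forall a b, Num.max (mu a) (mu b) <= mu (g a b)) ->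
  forall y z, Num.max (fuzzy_image f mu y) (fuzzy_image f mu z)
              <= fuzzy_image f mu (h y z).
Proof.
move=> fg mu_g y z; rewrite ge_max; apply/andP; split.
- have [b <-] := f_surj z; apply: (fuzzy_image_homo (g^~ b) (h^~ (f b))) => [a|a].
    exact: fg.
  by apply: le_trans (mu_g a b); rewrite le_max lexx.
- have [a <-] := f_surj y; apply: (fuzzy_image_homo (g a) (h (f a))) => [b|b].
    exact: fg.
  by apply: le_trans (mu_g a b); rewrite le_max lexx orbT.
Qed.

Lemma fuzzy_image_min (g : L1 -> L1 -> L1) (h : L2 -> L2 -> L2) :
  {morph f : a b / g a b >-> h a b} ->
  (forall a b, Num.min (mu a) (mu b) <= mu (g a b)) ->
  forall y z, Num.min (fuzzy_image f mu y) (fuzzy_image f mu z)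
              <= fuzzy_image f mu (h y z).
Proof.
move=> fg mu_g y z; rewrite leNgt; apply/negP => /[dup] gt_t.
rewrite lt_min => /andP[/fuzzy_image_gt [a fa lt_a] /fuzzy_image_gt [b fb lt_b]].
have : fuzzy_image f mu (h y z) < Num.min (mu a) (mu b) by rewrite lt_min lt_a.
apply/negP; rewrite -leNgt; apply: le_trans (mu_g a b) _.
by apply: le_fuzzy_image; rewrite fg fa fb.
Qed.

Lemma fuzzy_image_bounded :
  (forall x, 0 <= mu x <= 1) -> forall y, 0 <= fuzzy_image f mu y <= 1.
Proof.
move=> mu01 y; have [a fa] := f_surj y; apply/andP; split.
  by apply: le_trans (le_fuzzy_image fa); case/andP: (mu01 a).
by apply: fuzzy_image_le => b _; case/andP: (mu01 b).
Qed.

End FuzzyImage.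

Theorem theorem6p3 (R : realType) (F : fieldType) (L1 L2 : lmodType F)
    (br1 : L1 -> L1 -> L1) (alpha1 : L1 -> L1)
    (br2 : L2 -> L2 -> L2) (alpha2 : L2 -> L2) (f : L1 -> L2)
    (mu : L1 -> R) :
  is_hom_lie br1 alpha1 -> is_hom_lie br2 alpha2 ->
  is_hom_lie_morphism br1 alpha1 br2 alpha2 f ->
  (forall y : L2, exists x : L1, f x = y) ->
  fuzzy_hom_lie_ideal br1 alpha1 mu ->
  fuzzy_hom_lie_ideal br2 alpha2 (fuzzy_image f mu).
Proof.
move=> _ _ [f_lin [f_br f_alpha]] f_surj [mu01 [muD [muZ [mu_br mu_alpha]]]].
have mu_ub : has_ubound (range mu) by exists 1 => _ [a _ <-]; case/andP: (mu01 a).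
split; first exact: fuzzy_image_bounded f_surj mu_ub mu01.
split; first exact: fuzzy_image_min f_surj mu_ub +%R +%R (comb_linearD f_lin) muD.
split.
  move=> c; apply: fuzzy_image_homo f_surj mu_ub ( *:%R c) ( *:%R c) _ (muZ c).
  exact: comb_linearZ f_lin c.
split; first exact: fuzzy_image_max f_surj mu_ub br1 br2 f_br mu_br.
exact: fuzzy_image_homo f_surj mu_ub alpha1 alpha2 f_alpha mu_alpha.
Qed.
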